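(* Consider the self-attention dynamics with LayerNorm, $X^{(t+1)}=D^{(t)}A^{(t)}X^{(t)}W_V^{(t)}$. Let $\mathcal{G}$ be strongly connected with radius $r$, assume \textbf{A1} and \textbf{A2}, assume that $W_V^{(t)}\in\mathbb{R}^{d\times d}$ is orthogonal for all $t\ge0$, and assume the initial input $X^{(0)}$ (with rows of unit Euclidean norm) satisfies $N\le d$ and $X^{(0)}$ has full rank $N$. Then there exist $C>0$ and $\epsilon>0$ with $N\epsilon<1$ such that $$\mu(X^{(t)})\le C\,(1-N\epsilon^{2r})^{t/(2r)}\qquad\text{for all }t\ge0,$$ i.e. all tokens converge exponentially to a common point of the unit sphere $\mathbb{S}^{d-1}$.
   Context: Tokens are the rows of $X\in\mathbb{R}^{N\times d}$. An attention mask is a directed graph $\mathcal{G}$ on $[N]$ with edge set $E(\mathcal{G})$; $(j,i)\in E(\mathcal{G})$ means token $i$ attends to token $j$; $\mathcal{N}_i=\{k:(k,i)\in E(\mathcal{G})\}$. Masked softmax: $\mathrm{softmax}_{\mathcal{G}}(R)_{ij}=\exp(R_{ij})/\sum_{k\in\mathcal{N}_i}\exp(R_{ik})$ if $(j,i)\in E(\mathcal{G})$, else $0$. $A^{(t)}=\mathrm{softmax}_{\mathcal{G}}\big(X^{(t)}W_Q^{(t)}(X^{(t)}W_K^{(t)})^\top/\sqrt{d_{QK}}\big)$ with fixed $d_{QK}>0$, $W_Q^{(t)},W_K^{(t)}\in\mathbb{R}^{d\times d'}$. LayerNorm (scaling only): $D^{(t)}=\mathrm{diag}(d_1,\dots,d_N)$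 with $d_i=1/\|(A^{(t)}X^{(t)}W_V^{(t)})_{i,:}\|_2$, so every row of $X^{(t+1)}$ has unit norm. The mask is the same for all $t$. \textbf{A1}: $(i,i)\in E(\mathcal{G})$ for all $i$. \textbf{A2}: $\sup_t\max\{\|W_Q^{(t)}\|_2,\|W_K^{(t)}\|_2\}<\infty$. $\mu(X)=\|X-\mathbf{1}\mathbf{1}^\top X/N\|_F$ with $\mathbf{1}\in\mathbb{R}^N$ the all-ones vector. $\mathcal{G}$ is strongly connected if any two distinct nodes are reachable from each other by directed paths. The radius of $\mathcal{G}$ is $\min_{c}\max_v\mathrm{dist}(c,v)$, the minimum over center nodes $c$ (nodes from which every node is reachable), where $\mathrm{dist}(u,v)$ is the length of a shortest directed path from $u$ to $v$. *)

From HB Require Import structures.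
From mathcomp Require Import all_boot all_order all_algebra.
From mathcomp Require Import all_classical all_reals all_analysis.
Set Implicit Arguments. Unset Strict Implicit. Unset Printing Implicit Defensive.
Import Order.TTheory GRing.Theory Num.Theory.
Local Open Scope ring_scope.

(* Attention mask: a relation E on 'I_N; [E j i] means (j,i) \in E(G),
   i.e. token i attends to token j. *)

Definition path_le (N : nat) (E : rel 'I_N) (k : nat) (u v : 'I_N) : Prop :=
  exists p : seq 'I_N, [/\ path E u p, last u p = v & (size p <= k)%N].

Definition strongly_connected (N : nat) (E : rel 'I_N) : Prop :=
  forall u v : 'I_N, connect E u v.

Definition is_radius (N : nat) (E : rel 'I_N) (r : nat) : Prop :=
  (exists c : 'I_N, forall v, path_le E r c v) /\
  (forall (c : 'I_N) (k : nat), (forall v, path_le E k c v) -> (r <= k)%N).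

Definition rownorm (R : realType) (m n : nat) (Y : 'M[R]_(m, n)) (i : 'I_m) : R :=
  Num.sqrt (\sum_(j < n) Y i j ^+ 2).

Definition softmaxG (R : realType) (N : nat) (E : rel 'I_N) (S : 'M[R]_N)
  : 'M[R]_N :=
  \matrix_(i, j) (if E j i then
       expR (S i j) / \sum_(k < N | E k i) expR (S i k) else 0).

Definition attn (R : realType) (N d d' : nat) (E : rel 'I_N) (dQK : R)
  (X : 'M[R]_(N, d)) (WQ WK : 'M[R]_(d, d')) : 'M[R]_N :=
  softmaxG E ((Num.sqrt dQK)^-1 *: ((X *m WQ) *m (X *m WK)^T)).

Definition LNdiag (R : realType) (N d : nat) (Y : 'M[R]_(N, d)) : 'M[R]_N :=
  diag_mx (\row_i (rownorm Y i)^-1).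

Definition sa_step (R : realType) (N d d' : nat) (E : rel 'I_N) (dQK : R)
  (X : 'M[R]_(N, d)) (WQ WK : 'M[R]_(d, d')) (WV : 'M[R]_d) : 'M[R]_(N, d) :=
  let Y := attn E dQK X WQ WK *m X *m WV in LNdiag Y *m Y.

Definition vnorm (R : realType) (n : nat) (x : 'cV[R]_n) : R :=
  Num.sqrt (\sum_(i < n) x i 0 ^+ 2).

Definition opnorm_le (R : realType) (m n : nat) (W : 'M[R]_(m, n)) (B : R) : Prop :=
  forall x : 'cV[R]_n, vnorm (W *m x) <= B * vnorm x.

Definition mu (R : realType) (N d : nat) (X : 'M[R]_(N, d)) : R :=
  Num.sqrt (\sum_(i < N) \sum_(j < d)
    (X i j - (N%:R)^-1 * \sum_(k < N) X k j) ^+ 2).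

From Pilot Require Import Defs.
From HB Require Import structures.
From mathcomp Require Import all_boot all_order all_algebra.
From mathcomp Require Import all_classical all_reals all_analysis.
From mathcomp Require Import ring lra.
Set Implicit Arguments. Unset Strict Implicit. Unset Printing Implicit Defensive.
Import Order.TTheory GRing.Theory Num.Theory.
Local Open Scope ring_scope.

(* Since LayerNorm only rescales rows and W_V is orthogonal, the trajectory
   has the form X_t = LN(U_t X_0) Q_t with Q_t orthogonal and U_t row
   stochastic: each step multiplies U_t on the left by the attention matrix
   reweighted by the inverse row norms of U_t X_0.  A right inverse of X_0
   keeps these row norms in [nu, sqrt d], and bounded query/key weights bound
   the attention scores, so every edge of the mask carries a reweighted
   weight at least g > 0.  Along the paths of length r from a center, a
   Doeblin argument contracts the spread of every column of U_t by 1 - g^r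
   every r steps, and this spread controls mu(X_t). *)

(* The qualification [Defs.] is needed: [path_le] alone is a lemma of path.v. *)
Lemma path_le0 (N : nat) (E : rel 'I_N) (c v : 'I_N) : Defs.path_le E 0 c v -> v = c.
Proof. by case=> p [_ <-]; rewrite leqn0 size_eq0 => /eqP ->. Qed.

Lemma path_leSr (N : nat) (E : rel 'I_N) (k : nat) (c v : 'I_N) :
  (forall i, E i i) -> Defs.path_le E k.+1 c v -> exists2 w, Defs.path_le E k c w & E w v.
Proof.
move=> E_refl [p [hp <-]]; case/lastP: p hp => [|p w] /=.
  by move=> _ _; exists c => //; exists [::].
rewrite rcons_path last_rcons size_rcons ltnS => /andP[hp hw] hk.
by exists (last c p) => //; exists p.
Qed.

Section ConvexCombination.
Variables (R : numDomainType) (N : nat) (lam x : 'I_N -> R).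
Hypotheses (lam_ge0 : forall j, 0 <= lam j) (lam_sum1 : \sum_j lam j = 1).

Lemma convex_sum_lb (a : R) : (forall j, a <= x j) -> a <= \sum_j lam j * x j.
Proof.
move=> ha; rewrite -[a]mul1r -lam_sum1 mulr_suml.
by apply: ler_sum => j _; apply: ler_wpM2l.
Qed.

Lemma convex_sum_ge (a : R) (w : 'I_N) :
  (forall j, a <= x j) -> a + lam w * (x w - a) <= \sum_j lam j * x j.
Proof.
move=> ha.
have -> : \sum_j lam j * x j = a + \sum_j lam j * (x j - a).
  rewrite -[a in a + _]mul1r -lam_sum1 mulr_suml -big_split /=.
  by apply: eq_bigr => j _; rewrite mulrBr addrC subrK.
rewrite lerD2l (bigD1 w) //= lerDl sumr_ge0 // => j _.
by rewrite mulr_ge0 // subr_ge0.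
Qed.

End ConvexCombination.

Section Averaging.
Variables (R : realType) (N : nat) (E : rel 'I_N).
Variables (lam : nat -> 'I_N -> 'I_N -> R) (g : R).
Hypotheses (E_refl : forall i, E i i) (g_ge0 : 0 <= g) (g_le1 : g <= 1).
Hypotheses (lam_ge0 : forall t i j, 0 <= lam t i j)
  (lam_sum1 : forall t i, \sum_j lam t i j = 1)
  (lam_floor : forall t i j, E j i -> g <= lam t i j).

Definition averaging (u : nat -> 'I_N -> R) :=
  forall t i, u t.+1 i = \sum_j lam t i j * u t j.

Lemma averaging_opp u : averaging u -> averaging (fun t i => - u t i).
Proof. by move=> hu t i; rewrite hu -sumrN; apply: eq_bigr => j _; rewrite mulrN. Qed.

Lemma averaging_ge u t a :
  averaging u -> (forall i, a <= u t i) -> forall s i, a <= u (t + s)%N i.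
Proof.
move=> hu ha; elim=> [|s IH] i; first by rewrite addn0.
by rewrite addnS hu; apply: convex_sum_lb.
Qed.

Lemma averaging_path_ge u (c : 'I_N) t a :
  averaging u -> (forall i, a <= u t i) ->
  forall s v, Defs.path_le E s c v -> a + g ^+ s * (u t c - a) <= u (t + s)%N v.
Proof.
move=> hu ha; have hac : 0 <= u t c - a by rewrite subr_ge0.
elim=> [|s IH] v.
  by move/path_le0 ->; rewrite addn0 expr0 mul1r addrC subrK.
case/(path_leSr E_refl) => w /IH hw hwv.
rewrite addnS hu.
apply: le_trans (convex_sum_ge (lam_ge0 _ v) (lam_sum1 _ v) w (averaging_ge hu ha s)).
rewrite lerD2l exprS -mulrA.
apply: (@le_trans _ _ (lam (t + s)%N v w * (g ^+ s * (u t c - a)))).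
  by apply: ler_wpM2r; [rewrite mulr_ge0 ?exprn_ge0 | exact: lam_floor].
by rewrite ler_wpM2l //; lra.
Qed.

(* Doeblin: every node receives at least the weight g^r from the center c, so
   after r steps the spread shrinks by the factor 1 - g^r. *)
Lemma averaging_contract u (c : 'I_N) r :
  averaging u -> (forall v, Defs.path_le E r c v) ->
  forall t D, (forall i j, `|u t i - u t j| <= D) ->
  forall i j, `|u (t + r)%N i - u (t + r)%N j| <= (1 - g ^+ r) * D.
Proof.
move=> hu hc t D hD.
have [m _ hm] := @arg_minP _ _ _ c xpredT (u t) isT.
have [M _ hM] := @arg_maxP _ _ _ c xpredT (u t) isT.
have low := averaging_path_ge hu (fun i => hm i isT) (hc _).
have hMopp i : - u t M <= - u t i by rewrite lerN2; apply: hM.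
have up := averaging_path_ge (averaging_opp hu) hMopp (hc _).
have /andP[hgr0 hgr1] : 0 <= g ^+ r <= 1 by rewrite exprn_ge0 // exprn_ile1.
have hmM : u t M - u t m <= D by apply: le_trans (ler_norm _) (hD _ _).
have hcm : u t m <= u t c by apply: hm.
have hcM : u t c <= u t M by apply: hM.
have spread : forall i j, u (t + r)%N i - u (t + r)%N j <= (1 - g ^+ r) * D.
  move=> i j; have := low j; have := up i => /= h2 h3.
  have : (1 - g ^+ r) * (u t M - u t m) <= (1 - g ^+ r) * D.
    by rewrite ler_wpM2l // subr_ge0.
  nra.
move=> i j; rewrite ler_norml spread andbT.
by rewrite lerNl opprB spread.
Qed.

Lemma averaging_decay u (c : 'I_N) r :
  averaging u -> (forall v, Defs.path_le E r c v) -> (forall t i, 0 <= u t i <= 1) ->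
  forall t i j, `|u t i - u t j| <= (1 - g ^+ r) ^+ (t %/ r).
Proof.
move=> hu hc hu01.
suff decay q t : (q * r <= t)%N -> forall i j, `|u t i - u t j| <= (1 - g ^+ r) ^+ q.
  by move=> t; apply: decay; rewrite leq_divM.
elim: q t => [|q IH] t hq i j.
  rewrite expr0 ler_norml.
  by have /andP[? ?] := hu01 t i; have /andP[? ?] := hu01 t j; apply/andP; split; lra.
have hrt : (r <= t)%N by rewrite (leq_trans _ hq) // mulSn leq_addr.
rewrite -(subnK hrt) exprS; apply: (averaging_contract hu hc) => i' j'.
by apply: IH; rewrite leq_subRL // -mulSn.
Qed.

End Averaging.

Section RowNorms.
Variable R : realType.

Lemma sum_le_const (n : nat) (f : 'I_n -> R) (c : R) :
  (forall k, f k <= c) -> \sum_k f k <= n%:R * c.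
Proof.
by move=> hf; rewrite -[n in n%:R]card_ord mulr_natl -sumr_const; apply: ler_sum.
Qed.

Lemma abs_le_sqrt_sumsq (n : nat) (f : 'I_n -> R) (i : 'I_n) :
  `|f i| <= Num.sqrt (\sum_k f k ^+ 2).
Proof.
rewrite -sqrtr_sqr ler_sqrt ?sumr_ge0 // => [|k _]; last exact: sqr_ge0.
by rewrite (bigD1 i) //= lerDl sumr_ge0 // => k _; exact: sqr_ge0.
Qed.

Variables m n : nat.
Implicit Types (M : 'M[R]_(m, n)) (O : 'M[R]_n).

Lemma rownorm_ge0 M i : 0 <= rownorm M i.
Proof. exact: sqrtr_ge0. Qed.

Lemma rownorm_entry M i j : `|M i j| <= rownorm M i.
Proof. exact: (abs_le_sqrt_sumsq (fun k => M i k)). Qed.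

Lemma rownorm_mxE M i : rownorm M i = Num.sqrt ((M *m M^T) i i).
Proof.
by rewrite /rownorm !mxE; congr Num.sqrt; apply: eq_bigr => k _; rewrite mxE expr2.
Qed.

Lemma rownorm_mul_orth M O i : O *m O^T = 1%:M -> rownorm (M *m O) i = rownorm M i.
Proof. by move=> hO; rewrite !rownorm_mxE trmx_mul mulmxA -(mulmxA M) hO mulmx1. Qed.

Lemma rownorm_diag_mul (s : 'rV[R]_m) M i :
  rownorm (diag_mx s *m M) i = `|s 0 i| * rownorm M i.
Proof.
rewrite /rownorm -sqrtr_sqr -sqrtrM ?sqr_ge0 // mulr_sumr; congr Num.sqrt.
by apply: eq_bigr => k _; rewrite mul_diag_mx mxE exprMn.
Qed.

Definition layer_norm M : 'M[R]_(m, n) := LNdiag M *m M.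

Lemma layer_normE M i j : layer_norm M i j = (rownorm M i)^-1 * M i j.
Proof. by rewrite /layer_norm /LNdiag mul_diag_mx !mxE. Qed.

Lemma rownorm_layer_norm_le1 M i : rownorm (layer_norm M) i <= 1.
Proof.
rewrite /layer_norm /LNdiag rownorm_diag_mul mxE ger0_norm ?invr_ge0 ?rownorm_ge0 //.
by have [->|h] := eqVneq (rownorm M i) 0; rewrite ?invr0 ?mul0r ?mulVf.
Qed.

Lemma layer_norm_mul_orth M O :
  O *m O^T = 1%:M -> layer_norm (M *m O) = layer_norm M *m O.
Proof.
move=> hO; apply/matrixP => i j; rewrite layer_normE rownorm_mul_orth // !mxE mulr_sumr.
by apply: eq_bigr => k _; rewrite layer_normE mulrA.
Qed.

Lemma layer_norm_diag_mul (s : 'rV[R]_m) M :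
  (forall i, 0 < s 0 i) -> layer_norm (diag_mx s *m M) = layer_norm M.
Proof.
move=> hs; apply/matrixP => i j.
rewrite !layer_normE rownorm_diag_mul gtr0_norm // mul_diag_mx mxE invfM.
by rewrite [_ / _]mulrC -mulrA mulKf ?gt_eqF.
Qed.

End RowNorms.

Section Dispersion.
Variables (R : realType) (N d : nat).
Implicit Types (M : 'M[R]_(N, d)).

Definition center M : 'M[R]_(N, d) :=
  \matrix_(i, j) (M i j - (N%:R)^-1 * \sum_(k < N) M k j).

Lemma mu_rownormE M : mu M = Num.sqrt (\sum_i rownorm (center M) i ^+ 2).
Proof.
rewrite /mu; congr Num.sqrt; apply: eq_bigr => i _.
rewrite /rownorm sqr_sqrtr ?sumr_ge0 // => [|k _]; last exact: sqr_ge0.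
by apply: eq_bigr => j _; rewrite mxE.
Qed.

Lemma center_mul M (O : 'M[R]_d) : center (M *m O) = center M *m O.
Proof.
apply/matrixP => i j; rewrite !mxE.
under [X in _ * X]eq_bigr do rewrite mxE.
rewrite exchange_big /= mulr_sumr -sumrB; apply: eq_bigr => l _.
by rewrite !mxE mulrBl -mulrA mulr_suml.
Qed.

Lemma mu_mul_orth M (O : 'M[R]_d) : O *m O^T = 1%:M -> mu (M *m O) = mu M.
Proof.
move=> hO; rewrite !mu_rownormE center_mul; congr Num.sqrt.
by apply: eq_bigr => i _; rewrite rownorm_mul_orth.
Qed.

Lemma mu_le_spread M (W : R) :
  (0 < N)%N -> 0 <= W -> (forall i j l, `|M i l - M j l| <= W) ->
  mu M <= Num.sqrt (N%:R * d%:R) * W.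
Proof.
move=> hN hW hM.
have hNR : 0 < N%:R :> R by rewrite ltr0n.
have hcen i j : `|M i j - (N%:R)^-1 * \sum_(k < N) M k j| <= W.
  have -> : M i j - (N%:R)^-1 * \sum_(k < N) M k j = (N%:R)^-1 * \sum_k (M i j - M k j).
    rewrite sumrB sumr_const card_ord mulrBr -(mulr_natr (M i j)) mulrCA.
    by rewrite mulVf ?mulr1 ?gt_eqF.
  rewrite normrM [`|_^-1|]ger0_norm ?invr_ge0 ?ler0n // ler_pdivrMl //.
  exact: le_trans (ler_norm_sum _ _ _) (sum_le_const _).
rewrite /mu -[W]ger0_norm // -sqrtr_sqr -sqrtrM ?mulr_ge0 ?ler0n //.
rewrite ler_sqrt ?mulr_ge0 ?sqr_ge0 ?ler0n // -mulrA.
apply: sum_le_const => i; apply: sum_le_const => j.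
by rewrite -real_normK ?num_real // ler_sqr ?nnegrE ?normr_ge0.
Qed.

End Dispersion.

Section MaskedSoftmax.
Variables (R : realType) (N : nat) (E : rel 'I_N) (S : 'M[R]_N).

Lemma softmaxG_ge0 i j : 0 <= softmaxG E S i j.
Proof.
rewrite mxE; case: (E j i) => //.
by rewrite divr_ge0 ?sumr_ge0 // => *; apply: ltW; apply: expR_gt0.
Qed.

Lemma softmaxG_sum1 i : E i i -> \sum_j softmaxG E S i j = 1.
Proof.
move=> Eii; under eq_bigr do rewrite mxE.
rewrite -big_mkcond /= -mulr_suml mulfV // gt_eqF // (bigD1 i) //=.
by rewrite ltr_pwDl ?expR_gt0 // sumr_ge0 // => *; exact: ltW (expR_gt0 _).
Qed.

Lemma softmaxG_ge (K : R) : (forall i j, `|S i j| <= K) ->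
  forall i j, E j i -> expR (- K) / (N%:R * expR K) <= softmaxG E S i j.
Proof.
move=> hS i j Eji; rewrite mxE Eji.
have hden : 0 < \sum_(k | E k i) expR (S i k).
  by rewrite (bigD1 j) //= ltr_pwDl ?expR_gt0 // sumr_ge0 // => *; exact: ltW (expR_gt0 _).
have hNK : 0 < N%:R * expR K :> R.
  by rewrite mulr_gt0 ?expR_gt0 // ltr0n (leq_ltn_trans (leq0n i) (ltn_ord i)).
apply: ler_pM; [exact: expR_ge0 | by rewrite invr_ge0 ltW | |].
  by rewrite ler_expR; have := hS i j; rewrite ler_norml => /andP[].
rewrite lef_pV2 ?posrE // big_mkcond /=; apply: sum_le_const => k.
case: (E k i); last exact: expR_ge0.
by rewrite ler_expR (le_trans (ler_norm _)).
Qed.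

End MaskedSoftmax.

Lemma opnorm_le_entry (R : realType) m n (W : 'M[R]_(m, n)) B :
  opnorm_le W B -> forall i l, `|W i l| <= B.
Proof.
move=> hW i l; have := hW (delta_mx l 0).
have -> : vnorm (delta_mx l 0 : 'cV[R]_n) = 1.
  rewrite /vnorm (bigD1 l) //= big1 ?addr0 ?mxE ?eqxx ?expr1n ?sqrtr1 // => k hk.
  by rewrite mxE (negPf hk) /= expr0n.
rewrite mulr1; apply: le_trans.
have -> : W i l = (W *m (delta_mx l 0 : 'cV[R]_n)) i 0.
  rewrite mxE (bigD1 l) //= big1 ?addr0 ?mxE ?eqxx ?mulr1 // => k hk.
  by rewrite mxE (negPf hk) mulr0.
exact: (abs_le_sqrt_sumsq (fun k => (W *m (delta_mx l 0 : 'cV[R]_n)) k 0)).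
Qed.

Lemma mulmx_entry_le (R : realType) (N d d' : nat) (X : 'M[R]_(N, d))
  (W : 'M[R]_(d, d')) B :
  (forall i l, `|X i l| <= 1) -> (forall i l, `|W i l| <= B) ->
  forall i l, `|(X *m W) i l| <= d%:R * B.
Proof.
move=> hX hW i l; rewrite mxE (le_trans (ler_norm_sum _ _ _)) //.
apply: sum_le_const => k; rewrite normrM -[B]mul1r.
by apply: ler_pM; rewrite ?normr_ge0.
Qed.

Lemma mulmx_spread (R : realType) (m N d : nat) (U : 'M[R]_(m, N))
  (X0 : 'M[R]_(N, d)) (S : R) :
  (forall k l, `|X0 k l| <= 1) -> (forall i j k, `|U i k - U j k| <= S) ->
  forall i j l, `|(U *m X0) i l - (U *m X0) j l| <= N%:R * S.
Proof.
move=> hX hS i j l; rewrite !mxE -sumrB.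
under eq_bigr do rewrite -mulrBl.
apply: le_trans (ler_norm_sum _ _ _) _; apply: sum_le_const => k.
by rewrite normrM -[S]mulr1; apply: ler_pM; rewrite ?normr_ge0.
Qed.

Lemma attn_score_le (R : realType) (N d d' : nat) (dQK : R) (X : 'M[R]_(N, d))
  (WQ WK : 'M[R]_(d, d')) B :
  (forall i l, `|X i l| <= 1) ->
  (forall i l, `|WQ i l| <= B) -> (forall i l, `|WK i l| <= B) ->
  forall i j, `|((Num.sqrt dQK)^-1 *: ((X *m WQ) *m (X *m WK)^T)) i j|
    <= (Num.sqrt dQK)^-1 * (d'%:R * (d%:R * B) ^+ 2).
Proof.
move=> hX hQ hK i j; rewrite !mxE normrM ger0_norm ?invr_ge0 ?sqrtr_ge0 //.
rewrite ler_wpM2l ?invr_ge0 ?sqrtr_ge0 // (le_trans (ler_norm_sum _ _ _)) //.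
apply: sum_le_const => l; rewrite [(X *m WK)^T _ _]mxE normrM expr2.
by apply: ler_pM; rewrite ?normr_ge0 ?mulmx_entry_le.
Qed.

Definition row_stochastic (R : numDomainType) m n (U : 'M[R]_(m, n)) :=
  forall i, (forall k, 0 <= U i k) /\ \sum_k U i k = 1.

Section RowStochastic.
Variable R : realType.

Lemma row_stochastic1 n : row_stochastic (1%:M : 'M[R]_n).
Proof.
move=> i; split=> [k|]; first by rewrite mxE ler0n.
rewrite (bigD1 i) //= big1 ?addr0 ?mxE ?eqxx // => k hk.
by rewrite mxE eq_sym (negPf hk).
Qed.

Lemma row_stochastic_mul m n p (L : 'M[R]_(m, n)) (U : 'M[R]_(n, p)) :
  row_stochastic L -> row_stochastic U -> row_stochastic (L *m U).
Proof.
move=> hL hU i; split=> [k|].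
  by rewrite mxE sumr_ge0 // => j _; rewrite mulr_ge0 ?(hL i).1 ?(hU j).1.
under eq_bigr do rewrite mxE.
rewrite exchange_big /= -(hL i).2; apply: eq_bigr => j _.
by rewrite -mulr_sumr (hU j).2 mulr1.
Qed.

Lemma row_stochastic_entry_le1 m n (U : 'M[R]_(m, n)) i k :
  row_stochastic U -> 0 <= U i k <= 1.
Proof.
case/(_ i) => U0 U1; rewrite U0 -U1 (bigD1 k) //= lerDl.
by rewrite sumr_ge0.
Qed.

Variables (m N d : nat) (X0 : 'M[R]_(N, d)) (U : 'M[R]_(m, N)).
Hypothesis U_stoch : row_stochastic U.

Lemma rownorm_stoch_mul_ge (RI : 'M[R]_(d, N)) i :
  X0 *m RI = 1%:M -> 1 <= rownorm (U *m X0) i * \sum_k \sum_l `|RI l k|.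
Proof.
move=> hRI; have [U0 U1] := U_stoch i.
have -> : (1 : R) = \sum_k (U *m X0 *m RI) i k by rewrite -mulmxA hRI mulmx1.
rewrite mulr_sumr; apply: ler_sum => k _; apply: le_trans (ler_norm _) _.
rewrite mxE; apply: le_trans (ler_norm_sum _ _ _) _.
rewrite mulr_sumr; apply: ler_sum => l _.
by rewrite normrM ler_wpM2r ?normr_ge0 ?rownorm_entry.
Qed.

Lemma stoch_mul_entry_le1 :
  (forall k l, `|X0 k l| <= 1) -> forall i l, `|(U *m X0) i l| <= 1.
Proof.
move=> hX i l; have [U0 U1] := U_stoch i.
rewrite mxE -U1; apply: le_trans (ler_norm_sum _ _ _) _; apply: ler_sum => k _.
by rewrite normrM (ger0_norm (U0 k)) ler_piMr.
Qed.

Lemma rownorm_stoch_mul_le :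
  (forall k l, `|X0 k l| <= 1) -> forall i, rownorm (U *m X0) i <= Num.sqrt d%:R.
Proof.
move=> hX i; rewrite ler_sqrt ?ler0n // -[X in _ <= X]mulr1; apply: sum_le_const => l.
rewrite -real_normK ?num_real // -(expr1n _ 2) ler_sqr ?nnegrE ?normr_ge0 //.
exact: stoch_mul_entry_le1.
Qed.

End RowStochastic.

Lemma layer_norm_spread (R : realType) (N d : nat) (V : 'M[R]_(N, d)) (nu D : R) :
  0 < nu -> (forall i, nu <= rownorm V i) -> (forall i j l, `|V i l - V j l| <= D) ->
  forall i j l, `|layer_norm V i l - layer_norm V j l| <= (D + d%:R * D) / nu.
Proof.
move=> nu_gt0 hnu hD; set n := rownorm V.
have n_gt0 i : 0 < n i by apply: lt_le_trans (hnu i).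
have n_spread i j : `|n i - n j| <= d%:R * D.
  have hsum : 0 < n i + n j by rewrite addr_gt0.
  rewrite -(ler_pM2r hsum).
  have -> : `|n i - n j| * (n i + n j) = `|\sum_l (V i l - V j l) * (V i l + V j l)|.
    rewrite -(ger0_norm (ltW hsum)) -normrM; congr `|_|.
    have -> : (n i - n j) * (n i + n j) = n i ^+ 2 - n j ^+ 2 by ring.
    rewrite /n /rownorm !sqr_sqrtr ?sumr_ge0 // => [|k _|k _]; try exact: sqr_ge0.
    by rewrite -sumrB; apply: eq_bigr => l _; ring.
  apply: le_trans (ler_norm_sum _ _ _) _; rewrite -mulrA; apply: sum_le_const => l.
  rewrite normrM; apply: ler_pM; rewrite ?normr_ge0 //.
  by apply: le_trans (ler_normD _ _) _; apply: lerD; exact: rownorm_entry.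
move=> i j l; rewrite !layer_normE -/n.
have ni := n_gt0 i; have nj := n_gt0 j.
have -> : (n i)^-1 * V i l - (n j)^-1 * V j l =
    (n i)^-1 * ((V i l - V j l) + ((n j)^-1 * V j l) * (n j - n i)).
  by field; rewrite !gt_eqF.
rewrite normrM [`|_^-1|]ger0_norm ?invr_ge0 ?(ltW ni) // mulrC.
apply: ler_pM; [exact: normr_ge0 | by rewrite invr_ge0 ltW | | by rewrite lef_pV2 ?posrE].
apply: le_trans (ler_normD _ _) _; apply: lerD; first exact: hD.
rewrite normrM -[X in _ <= X]mul1r distrC; apply: ler_pM; rewrite ?normr_ge0 //.
by rewrite normrM [`|_^-1|]ger0_norm ?invr_ge0 ?(ltW nj) // ler_pdivrMl // mulr1 rownorm_entry.
Qed.

Section Reweighting.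
Variables (R : realType) (N d : nat) (A : 'M[R]_N) (V : 'M[R]_(N, d)).
Hypotheses (A_ge0 : forall i j, 0 <= A i j) (A_diag_gt0 : forall i, 0 < A i i).
Hypothesis V_gt0 : forall j, 0 < rownorm V j.

Definition reweight : 'M[R]_N :=
  \matrix_(i, j) ((A i j / rownorm V j) / \sum_k (A i k / rownorm V k)).

Lemma reweight_den_gt0 i : 0 < \sum_k (A i k / rownorm V k).
Proof.
rewrite (bigD1 i) //= ltr_pwDl ?divr_gt0 // sumr_ge0 // => k _.
by rewrite divr_ge0 // ltW.
Qed.

Lemma reweight_stochastic : row_stochastic reweight.
Proof.
move=> i; split=> [j|].
  by rewrite mxE !divr_ge0 // ltW ?reweight_den_gt0.
under eq_bigr do rewrite mxE.
by rewrite -mulr_suml mulfV // gt_eqF ?reweight_den_gt0.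
Qed.

(* Attention applied to layer-normalised tokens equals attention with the
   reweighted matrix up to a positive scaling of the rows, which the next
   LayerNorm removes. *)
Lemma layer_norm_attn (O : 'M[R]_d) :
  O *m O^T = 1%:M ->
  layer_norm (A *m (layer_norm V *m O)) = layer_norm (reweight *m V) *m O.
Proof.
move=> hO; set s := \row_i (\sum_k (A i k / rownorm V k)).
rewrite mulmxA; have -> : A *m layer_norm V = diag_mx s *m (reweight *m V).
  apply/matrixP => i l; rewrite mul_diag_mx !mxE mulr_sumr.
  apply: eq_bigr => j _; rewrite layer_normE !mxE.
  have := reweight_den_gt0 i; have := V_gt0 j.
  by move=> hj hi; field; rewrite !gt_eqF.
rewrite -mulmxA layer_norm_diag_mul => [|i]; last by rewrite mxE reweight_den_gt0.
exact: layer_norm_mul_orth.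
Qed.

End Reweighting.

Section Trajectory.
Variables (R : realType) (N d d' : nat) (E : rel 'I_N) (dQK B : R).
Variables (X : nat -> 'M[R]_(N, d)) (WQ WK : nat -> 'M[R]_(d, d')).
Variables (WV : nat -> 'M[R]_d) (RI : 'M[R]_(d, N)) (c : 'I_N) (r : nat).
Hypotheses (E_refl : forall i, E i i) (c_center : forall v, Defs.path_le E r c v).
Hypotheses (WQ_le : forall t, opnorm_le (WQ t) B) (WK_le : forall t, opnorm_le (WK t) B).
Hypothesis WV_orth : forall t, (WV t)^T *m WV t = 1%:M.
Hypothesis X_step : forall t, X t.+1 = sa_step E dQK (X t) (WQ t) (WK t) (WV t).
Hypotheses (X0_unit : forall i, rownorm (X 0%N) i = 1) (X0_rinv : X 0%N *m RI = 1%:M).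
Hypothesis d_gt0 : (0 < d)%N.

Let X0 := X 0%N.
Let A t := attn E dQK (X t) (WQ t) (WK t).

Lemma trajectory_entry_le1 t i l : `|X t i l| <= 1.
Proof.
case: t => [|t]; first by rewrite -(X0_unit i) rownorm_entry.
by rewrite X_step; apply: le_trans (rownorm_entry _ _ _) (rownorm_layer_norm_le1 _ _).
Qed.

Let K := (Num.sqrt dQK)^-1 * (d'%:R * (d%:R * B) ^+ 2).
Let delta := expR (- K) / (N%:R * expR K).

Lemma delta_gt0 : 0 < delta.
Proof.
by rewrite divr_gt0 ?expR_gt0 // mulr_gt0 ?expR_gt0 // ltr0n (leq_ltn_trans _ (ltn_ord c)).
Qed.

Lemma attn_ge_delta t i j : E j i -> delta <= A t i j.
Proof.
apply: softmaxG_ge; apply: attn_score_le.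
- exact: trajectory_entry_le1.
- exact: opnorm_le_entry (WQ_le t).
- exact: opnorm_le_entry (WK_le t).
Qed.

Lemma attn_diag_gt0 t i : 0 < A t i i.
Proof. exact: lt_le_trans delta_gt0 (attn_ge_delta t (E_refl i)). Qed.

Let nu := (\sum_k \sum_l `|RI l k|)^-1.

Lemma nu_gt0 : 0 < nu.
Proof.
have := rownorm_stoch_mul_ge (@row_stochastic1 R N) c X0_rinv.
rewrite invr_gt0 lt_neqAle sumr_ge0 ?andbT => [|k _]; last by rewrite sumr_ge0.
by apply: contraTneq => <-; rewrite mulr0 ler10.
Qed.

Lemma nu_le_rownorm (U : 'M[R]_N) i : row_stochastic U -> nu <= rownorm (U *m X0) i.
Proof.
move=> hU; have rho_gt0 : 0 < \sum_k \sum_l `|RI l k| by rewrite -invr_gt0 nu_gt0.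
by rewrite /nu -[_^-1]mul1r ler_pdivrMr // rownorm_stoch_mul_ge.
Qed.

Fixpoint mixing t : 'M[R]_N :=
  if t is t'.+1 then reweight (A t') (mixing t' *m X0) *m mixing t' else 1%:M.

Fixpoint rotation t : 'M[R]_d :=
  if t is t'.+1 then rotation t' *m WV t' else 1%:M.

Lemma trajectory_repr t :
  [/\ row_stochastic (mixing t), X t = layer_norm (mixing t *m X0) *m rotation t
    & rotation t *m (rotation t)^T = 1%:M].
Proof.
elim: t => [|t [hU hXt hQ]].
  split; [exact: row_stochastic1 | | by rewrite trmx1 mulmx1].
  rewrite /= mul1mx mulmx1; apply/matrixP => i l.
  by rewrite layer_normE X0_unit invr1 mul1r.
have hn j : 0 < rownorm (mixing t *m X0) j.
  exact: lt_le_trans nu_gt0 (nu_le_rownorm j hU).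
have hQW : (rotation t *m WV t) *m (rotation t *m WV t)^T = 1%:M.
  have hW : WV t *m (WV t)^T = 1%:M by apply: mulmx1C; apply: WV_orth.
  by rewrite trmx_mul mulmxA -(mulmxA (rotation t)) hW mulmx1.
have A_ge0 i j : 0 <= A t i j by apply: softmaxG_ge0.
split=> //.
  by apply: row_stochastic_mul hU; apply: reweight_stochastic => //; apply: attn_diag_gt0.
have -> : X t.+1 = layer_norm (A t *m X t *m WV t) := X_step t.
rewrite hXt -mulmxA -(mulmxA (layer_norm (mixing t *m X0))) layer_norm_attn //=.
  by rewrite !mulmxA.
exact: attn_diag_gt0.
Qed.

Let lam t := reweight (A t) (mixing t *m X0).

Lemma mixing_rownorm_gt0 t j : 0 < rownorm (mixing t *m X0) j.
Proof. by have [hU _ _] := trajectory_repr t; apply: lt_le_trans nu_gt0 (nu_le_rownorm j hU). Qed.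

Lemma lam_stochastic t : row_stochastic (lam t).
Proof.
apply: reweight_stochastic; [exact: softmaxG_ge0 | exact: attn_diag_gt0 | ].
exact: mixing_rownorm_gt0.
Qed.

Let g := Num.min (delta * nu / Num.sqrt d%:R) 2^-1.

Lemma g_gt0 : 0 < g.
Proof.
rewrite lt_min invr_gt0 ltr0n andbT.
by apply: divr_gt0; [exact: mulr_gt0 delta_gt0 nu_gt0 | rewrite sqrtr_gt0 ltr0n].
Qed.

Lemma g_le_half : g <= 2^-1.
Proof. by rewrite /g ge_min lexx orbT. Qed.

(* Every row norm lies in [nu, sqrt d], so reweighting distorts the attention
   weights by at most the factor nu / sqrt d. *)
Lemma lam_floor t i j : E j i -> g <= lam t i j.
Proof.
move=> Eji; have [hU _ _] := trajectory_repr t.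
set n := rownorm (mixing t *m X0).
set s := \sum_k (A t i k / n k).
have s_gt0 : 0 < s.
  apply: reweight_den_gt0; [exact: softmaxG_ge0 | exact: attn_diag_gt0 |].
  exact: mixing_rownorm_gt0.
have s_le : s <= nu^-1.
  have A_sum1 : \sum_k A t i k = 1 by apply: softmaxG_sum1.
  rewrite /s -[nu^-1]mul1r -A_sum1 mulr_suml.
  apply: ler_sum => k _; apply: ler_wpM2l; first exact: softmaxG_ge0.
  by rewrite lef_pV2 ?posrE ?nu_gt0 ?mixing_rownorm_gt0 ?nu_le_rownorm.
have a_ge : delta / Num.sqrt d%:R <= A t i j / n j.
  apply: ler_pM; [exact: ltW delta_gt0 | by rewrite invr_ge0 sqrtr_ge0 | | ].
    exact: attn_ge_delta.
  rewrite lef_pV2 ?posrE ?mixing_rownorm_gt0 ?sqrtr_gt0 ?ltr0n //.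
  exact: rownorm_stoch_mul_le hU (trajectory_entry_le1 0) j.
rewrite /lam /reweight mxE -/n -/s.
apply: (@le_trans _ _ (delta * nu / Num.sqrt d%:R)); first by rewrite /g ge_min lexx.
rewrite mulrAC -[nu]invrK; apply: ler_pM => //.
- exact: divr_ge0 (ltW delta_gt0) (sqrtr_ge0 _).
- by rewrite invrK; exact: ltW nu_gt0.
- by rewrite lef_pV2 ?posrE // invr_gt0 nu_gt0.
Qed.

Lemma mixing_spread t i j k :
  `|mixing t i k - mixing t j k| <= (1 - g ^+ r) ^+ (t %/ r).
Proof.
have g_le1 : g <= 1 by have := g_le_half; lra.
have lam_ge0 t' i' j' : 0 <= lam t' i' j' by have [] := lam_stochastic t' i'.
have lam_sum1 t' i' : \sum_j lam t' i' j = 1 by have [] := lam_stochastic t' i'.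
apply: (averaging_decay E_refl (ltW g_gt0) g_le1 lam_ge0 lam_sum1 lam_floor
  (u := fun t i => mixing t i k)) => [t' i'|//|t' i'].
  by rewrite /= mxE.
by have [hU _ _] := trajectory_repr t'; apply: row_stochastic_entry_le1.
Qed.

Lemma mu_trajectory_le t :
  mu (X t) <= Num.sqrt (N%:R * d%:R) * ((N%:R + d%:R * N%:R) / nu) * (1 - g ^+ r) ^+ (t %/ r).
Proof.
have [hU hXt hQ] := trajectory_repr t.
set s := (1 - g ^+ r) ^+ (t %/ r).
have s_ge0 : 0 <= s by apply: le_trans (mixing_spread t c c c); exact: normr_ge0.
have N_gt0 : (0 < N)%N by apply: leq_ltn_trans (ltn_ord c).
have V_spread := mulmx_spread (trajectory_entry_le1 0) (mixing_spread t).
have LN_spread := layer_norm_spread nu_gt0 (fun i => nu_le_rownorm i hU) V_spread.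
rewrite hXt mu_mul_orth //; apply: le_trans (mu_le_spread N_gt0 _ LN_spread) _.
  by apply: divr_ge0 (ltW nu_gt0); rewrite addr_ge0 ?mulr_ge0 ?ler0n.
have -> : (N%:R * s + d%:R * (N%:R * s)) / nu = (N%:R + d%:R * N%:R) / nu * s by ring.
by rewrite mulrA.
Qed.

Lemma mu_geometric_decay : exists K0 g0 : R, [/\ 0 <= K0, 0 < g0, g0 <= 2^-1 &
  forall t, mu (X t) <= K0 * (1 - g0 ^+ r) ^+ (t %/ r)].
Proof.
exists (Num.sqrt (N%:R * d%:R) * ((N%:R + d%:R * N%:R) / nu)), g.
split; [ | exact: g_gt0 | exact: g_le_half | exact: mu_trajectory_le].
by rewrite mulr_ge0 ?sqrtr_ge0 // (divr_ge0 _ (ltW nu_gt0)) // addr_ge0 ?mulr_ge0.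
Qed.

End Trajectory.

Lemma expr_div_le_powR (R : realType) (a : R) (r t : nat) :
  0 < a -> a <= 1 -> (0 < r)%N ->
  a ^+ (t %/ r) <= powR a (t%:R / (2 * r)%:R) / a.
Proof.
move=> a_gt0 a_le1 r_gt0; have a01 : 0 < a <= 1 by rewrite a_gt0.
have r_gt0' : 0 < r%:R :> R by rewrite ltr0n.
rewrite ler_pdivlMr // -exprSr -powR_mulrn; last exact: ltW.
apply: (@le_trans _ _ (powR a (t%:R / r%:R))).
  apply: ger_powR => //; rewrite ler_pdivrMr // -natrM ler_nat.
  by rewrite mulSn addnC ltnW // {1}(divn_eq t r) ltn_add2l ltn_pmod.
apply: ger_powR => //; rewrite natrM ler_wpM2l ?ler0n // lef_pV2 ?posrE ?mulr_gt0 //.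
lra.
Qed.

Lemma mulrn_expr2_le (R : realType) (N r : nat) (eps g : R) :
  (0 < N)%N -> (0 < r)%N -> 0 <= eps -> eps <= g -> N%:R * eps <= 1 ->
  N%:R * eps ^+ (2 * r) <= g ^+ r.
Proof.
move=> N_gt0 r_gt0 eps_ge0 eps_le_g Neps_le1.
have N_ge1 : 1 <= N%:R :> R by rewrite ler1n.
have eps_le1 : eps <= 1 by apply: le_trans Neps_le1; rewrite ler_peMl.
have Nepsr_le1 : N%:R * eps ^+ r <= 1.
  by apply: le_trans Neps_le1; rewrite ler_wpM2l ?ler0n // ler_iXnr.
have epsr_le : eps ^+ r <= g ^+ r by rewrite lerXn2r ?nnegrE // (le_trans eps_ge0).
rewrite mul2n -addnn exprD mulrA -[g ^+ r]mul1r.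
by apply: ler_pM; rewrite ?mulr_ge0 ?exprn_ge0 ?ler0n.
Qed.

Lemma geometric_decay_powR (R : realType) (N r : nat) (K0 g : R) :
  (0 < N)%N -> (0 < r)%N -> 0 < g -> g <= 2^-1 -> 0 <= K0 ->
  exists C eps : R, [/\ 0 < C, 0 < eps, N%:R * eps < 1 &
    forall t : nat, K0 * (1 - g ^+ r) ^+ (t %/ r) <=
      C * powR (1 - N%:R * eps ^+ (2 * r)) (t%:R / (2 * r)%:R)].
Proof.
move=> N_gt0 r_gt0 g_gt0 g_le_half K0_ge0.
have N_ge1 : 1 <= N%:R :> R by rewrite ler1n.
have gr_le : g ^+ r <= g by rewrite ler_iXnr // ?ltW //; lra.
set be := 1 - g ^+ r; set eps := g / (2 * N%:R).
have be_gt0 : 0 < be by rewrite /be; lra.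
have be_le1 : be <= 1 by rewrite /be lerBlDr lerDl exprn_ge0 ?ltW.
have eps_gt0 : 0 < eps by rewrite divr_gt0 //; lra.
have Neps : N%:R * eps = g / 2 by rewrite /eps; field; rewrite gt_eqF //; lra.
have eps_le_g : eps <= g.
  by rewrite /eps ler_pdivrMr; [rewrite ler_peMr; [|exact: ltW|] |]; lra.
have be_le : be <= 1 - N%:R * eps ^+ (2 * r).
  have Neps_le1 : N%:R * eps <= 1 by rewrite Neps; lra.
  have := mulrn_expr2_le N_gt0 r_gt0 (ltW eps_gt0) eps_le_g Neps_le1.
  by rewrite /be; lra.
exists (K0 / be + 1), eps; split=> //.
- by rewrite ltr_pwDr // divr_ge0 // ltW.
- by rewrite Neps; lra.
move=> t; rewrite -/be mulrDl mul1r.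
apply: le_trans (ler_wpM2l K0_ge0 (expr_div_le_powR t be_gt0 be_le1 r_gt0)) _.
rewrite -[X in X <= _]addr0 lerD ?powR_ge0 // [_ / be]mulrC mulrA.
rewrite ler_wpM2l ?divr_ge0 ?(ltW be_gt0) //.
by apply: ge0_ler_powR; rewrite ?nnegrE ?divr_ge0 ?ler0n //; lra.
Qed.

Unset Implicit Arguments.

Theorem theorem2 (R : realType) (N d d' : nat) (E : rel 'I_N) (r : nat)
  (dQK : R) (X : nat -> 'M[R]_(N, d)) (WQ WK : nat -> 'M[R]_(d, d'))
  (WV : nat -> 'M[R]_d) :
  0 < dQK ->
  strongly_connected E ->
  is_radius E r ->
  (forall i : 'I_N, E i i) ->
  (exists B : R, forall t, opnorm_le (WQ t) B /\ opnorm_le (WK t) B) ->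
  (forall t, (WV t)^T *m WV t = 1%:M) ->
  (forall t, X t.+1 = sa_step E dQK (X t) (WQ t) (WK t) (WV t)) ->
  (forall i, rownorm (X 0%N) i = 1) ->
  (N <= d)%N ->
  \rank (X 0%N) = N ->
  exists C eps : R, [/\ 0 < C, 0 < eps, N%:R * eps < 1 &
    forall t : nat, mu (X t) <=
      C * powR (1 - N%:R * eps ^+ (2 * r)) (t%:R / (2 * r)%:R)].
Proof.
move=> _ _ [[c c_center] _] E_refl [B hB] WV_orth X_step X0_unit N_le_d X0_rank.
have N_gt0 : (0 < N)%N by apply: leq_ltn_trans (ltn_ord c).
case: r c_center => [|r] c_center.
  exists 1, (N.+1%:R)^-1; split=> //.
    by rewrite ltr_pdivrMr ?ltr0n // mul1r ltr_nat.
  move=> t; rewrite mul1r; apply: le_trans (powR_ge0 _ _).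
  apply: le_trans (mu_le_spread (W := 0) N_gt0 (lexx 0) _) _; last by rewrite mulr0.
  by move=> i j l; rewrite (path_le0 (c_center i)) (path_le0 (c_center j)) subrr normr0.
have [RI X0_rinv] : exists RI, X 0%N *m RI = 1%:M.
  by apply/row_freeP; rewrite /row_free X0_rank.
have [K0 [g [K0_ge0 g_gt0 g_le_half decay]]] := mu_geometric_decay E_refl c_center
  (fun t => (hB t).1) (fun t => (hB t).2) WV_orth X_step X0_unit X0_rinv
  (leq_trans N_gt0 N_le_d).
have [C [eps [C_gt0 eps_gt0 Neps_lt1 rate]]] :=
  geometric_decay_powR N_gt0 (ltn0Sn r) g_gt0 g_le_half K0_ge0.
by exists C, eps; split=> // t; apply: le_trans (decay t) (rate t).
Qed.
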